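(* Consider a road network given by a directed graph with node set $\mathcal{N}_r$ and a position map $P:\mathcal{N}_r\to\mathbb{R}^2$, and a maximum speed $v_{\max}>0$. For each transport assignment $k$ let $n_k=n_k[1],\dots,n_k[N_k]$ be its route (a path of nodes), $t^S_k$ its earliest start time and $t^D_k$ its latest arrival time, and define for $a=1,\dots,N_k$ $$\underline{t}_k[a]=t^S_k+\sum_{m=1}^{a-1}\frac{\|P(n_k[m+1])-P(n_k[m])\|_2}{v_{\max}},\qquad \bar{t}_k[a]=t^D_k-\sum_{m=a}^{N_k-1}\frac{\|P(n_k[m+1])-P(n_k[m])\|_2}{v_{\max}}.$$ Define the coordination function $g(i,j)\in\{0,1\}$ by $g(i,j)=1$ iff there exist indices $a,b$ with $P(n_i[a])=P(n_j[b])$, $P(n_i[a+1])=P(n_j[b+1])$, $[\underline{t}_i[a],\bar{t}_i[a]]\cap[\underline{t}_j[b],\bar{t}_j[b]]\neq\emptyset$ and $[\underline{t}_i[a+1],\bar{t}_i[a+1]]\cap[\underline{t}_j[b+1],\bar{t}_j[b+1]]\neq\emptyset$; otherwise $g(i,j)=0$. Fix $p\in\mathbb{R}^3$. For each assignment $k$ let $$\mathcal{R}_k=\left\{\begin{bmatrix}P(n_k[a])\\ \underline{t}_k[a]\end{bmatrix}: a=1,\dots,N_k\right\}\cup\left\{\begin{bmatrix}P(n_k[a])\\ \bar{t}_k[a]\end{bmatrix}: a=1,\dots,N_k\right\}\subset\mathbb{R}^3,$$ and $\mathcal{I}_k=[\min_{v\in\mathcal{R}_k}p^\top v,\ \max_{v\in\mathcal{R}_k}p^\top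 v]$. Then for any pair of transport assignments $(i,j)$, $\mathcal{I}_i\cap\mathcal{I}_j=\emptyset$ implies $g(i,j)=0$.
   Context: A transport assignment consists of a start node, a destination node, an earliest start time and a latest arrival time; its route is a given path in the graph from start to destination. The quantities $\underline{t}_k[a],\bar{t}_k[a]$ are lower and upper bounds on the time at which a vehicle implementing assignment $k$ at speed at most $v_{\max}$ can be at node $n_k[a]$. *)

From Stdlib Require Import Reals List ClassicalEpsilon.
Open Scope R_scope.

Definition dist2 (x y : R * R) : R :=
  sqrt ((fst x - fst y) ^ 2 + (snd x - snd y) ^ 2).

(* sumR f lo hi = \sum_{m=lo}^{hi} f m  (empty, i.e. 0, when hi < lo) *)
Definition sumR (f : nat -> R) (lo hi : nat) : R :=
  fold_right Rplus 0 (map f (seq lo (S hi - lo))).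

Definition seg_time {N : Type} (P : N -> R * R) (vmax : R) (n : nat -> N) (m : nat) : R :=
  dist2 (P (n (S m))) (P (n m)) / vmax.

(* Routes are 1-indexed: n[1], ..., n[Nk]. *)
Definition t_lo {N : Type} (P : N -> R * R) (vmax : R) (n : nat -> N) (tS : R) (a : nat) : R :=
  tS + sumR (seg_time P vmax n) 1 (a - 1).

Definition t_hi {N : Type} (P : N -> R * R) (vmax : R) (n : nat -> N) (Nk : nat) (tD : R) (a : nat) : R :=
  tD - sumR (seg_time P vmax n) a (Nk - 1).

Definition inter_nonempty (l1 h1 l2 h2 : R) : Prop :=
  exists t, l1 <= t <= h1 /\ l2 <= t <= h2.

Definition coordinated {N K : Type} (P : N -> R * R) (vmax : R)
  (n : K -> nat -> N) (Nk : K -> nat) (tS tD : K -> R) (i j : K) : Prop :=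
  exists a b : nat,
    (1 <= a)%nat /\ (a + 1 <= Nk i)%nat /\ (1 <= b)%nat /\ (b + 1 <= Nk j)%nat /\
    P (n i a) = P (n j b) /\ P (n i (a + 1)%nat) = P (n j (b + 1)%nat) /\
    inter_nonempty (t_lo P vmax (n i) (tS i) a) (t_hi P vmax (n i) (Nk i) (tD i) a)
                   (t_lo P vmax (n j) (tS j) b) (t_hi P vmax (n j) (Nk j) (tD j) b) /\
    inter_nonempty (t_lo P vmax (n i) (tS i) (a + 1)%nat) (t_hi P vmax (n i) (Nk i) (tD i) (a + 1)%nat)
                   (t_lo P vmax (n j) (tS j) (b + 1)%nat) (t_hi P vmax (n j) (Nk j) (tD j) (b + 1)%nat).

Definition g {N K : Type} (P : N -> R * R) (vmax : R)
  (n : K -> nat -> N) (Nk : K -> nat) (tS tD : K -> R) (i j : K) : nat :=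
  if excluded_middle_informative (coordinated P vmax n Nk tS tD i j) then 1%nat else 0%nat.

(* vectors of R^3 are ((x, y), t) *)
Definition dot3 (p v : (R * R) * R) : R :=
  fst (fst p) * fst (fst v) + snd (fst p) * snd (fst v) + snd p * snd v.

Definition Rset {N K : Type} (P : N -> R * R) (vmax : R)
  (n : K -> nat -> N) (Nk : K -> nat) (tS tD : K -> R) (k : K) : list ((R * R) * R) :=
  map (fun a => (P (n k a), t_lo P vmax (n k) (tS k) a)) (seq 1 (Nk k)) ++
  map (fun a => (P (n k a), t_hi P vmax (n k) (Nk k) (tD k) a)) (seq 1 (Nk k)).

Definition list_min (l : list R) : R :=
  match l with nil => 0 | x :: xs => fold_left Rmin xs x end.
Definition list_max (l : list R) : R :=
  match l with nil => 0 | x :: xs => fold_left Rmax xs x end.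

Definition in_I {N K : Type} (P : N -> R * R) (vmax : R)
  (n : K -> nat -> N) (Nk : K -> nat) (tS tD : K -> R) (p : (R * R) * R) (k : K) (y : R) : Prop :=
  list_min (map (dot3 p) (Rset P vmax n Nk tS tD k)) <= y <=
  list_max (map (dot3 p) (Rset P vmax n Nk tS tD k)).

From Pilot Require Import Defs.
From Stdlib Require Import Reals List Lra Lia Psatz.
Open Scope R_scope.

(* If the time windows of i at node a and of j at node b share a time t, then
   the point (P(n_i[a]), t) = (P(n_j[b]), t) projects to a common point of I_i
   and I_j: the linear form p^T is monotone in the time coordinate, so its value
   at t lies between its values at the window endpoints, both of which are
   points of R_k. *)

Lemma fold_left_Rmin_le (l : list R) (acc y : R) :
  In y (acc :: l) -> fold_left Rmin l acc <= y.
Proof.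
  revert acc y; induction l as [|x l IH]; intros acc y Hy; simpl.
  - destruct Hy as [<-|[]]; lra.
  - destruct Hy as [<-|[<-|Hy]].
    + pose proof (Rmin_l acc x); pose proof (IH (Rmin acc x) _ (in_eq _ _)); lra.
    + pose proof (Rmin_r acc x); pose proof (IH (Rmin acc x) _ (in_eq _ _)); lra.
    + apply IH; right; exact Hy.
Qed.

Lemma fold_left_Rmax_ge (l : list R) (acc y : R) :
  In y (acc :: l) -> y <= fold_left Rmax l acc.
Proof.
  revert acc y; induction l as [|x l IH]; intros acc y Hy; simpl.
  - destruct Hy as [<-|[]]; lra.
  - destruct Hy as [<-|[<-|Hy]].
    + pose proof (Rmax_l acc x); pose proof (IH (Rmax acc x) _ (in_eq _ _)); lra.
    + pose proof (Rmax_r acc x); pose proof (IH (Rmax acc x) _ (in_eq _ _)); lra.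
    + apply IH; right; exact Hy.
Qed.

Lemma list_min_le (l : list R) (y : R) : In y l -> Defs.list_min l <= y.
Proof. destruct l as [|x l]; [intros []|apply fold_left_Rmin_le]. Qed.

Lemma list_max_ge (l : list R) (y : R) : In y l -> y <= Defs.list_max l.
Proof. destruct l as [|x l]; [intros []|apply fold_left_Rmax_ge]. Qed.

Lemma between_list_min_max (l : list R) (u v y : R) :
  In u l -> In v l -> Rmin u v <= y <= Rmax u v -> Defs.list_min l <= y <= Defs.list_max l.
Proof.
  intros Hu Hv Hy.
  pose proof (list_min_le l u Hu); pose proof (list_min_le l v Hv).
  pose proof (list_max_ge l u Hu); pose proof (list_max_ge l v Hv).
  unfold Rmin, Rmax in Hy.
  destruct (Rle_dec u v); lra.
Qed.

Lemma dot3_between_times (p : (R * R) * R) (x : R * R) (lo hi t : R) :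
  lo <= t <= hi ->
  Rmin (dot3 p (x, lo)) (dot3 p (x, hi)) <= dot3 p (x, t)
    <= Rmax (dot3 p (x, lo)) (dot3 p (x, hi)).
Proof.
  intros Ht; unfold dot3, Rmin, Rmax; simpl.
  destruct (Rle_dec 0 (snd p));
    destruct (Rle_dec _ _); split; nra.
Qed.

Lemma in_I_of_window (Nr K : Type) (P : Nr -> R * R) (vmax : R)
  (n : K -> nat -> Nr) (Nk : K -> nat) (tS tD : K -> R)
  (p : (R * R) * R) (k : K) (a : nat) (t : R) :
  (1 <= a)%nat -> (a <= Nk k)%nat ->
  t_lo P vmax (n k) (tS k) a <= t <= t_hi P vmax (n k) (Nk k) (tD k) a ->
  in_I P vmax n Nk tS tD p k (dot3 p (P (n k a), t)).
Proof.
  intros Ha1 Ha2 Ht.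
  assert (Ha : In a (seq 1 (Nk k))) by (apply in_seq; lia).
  apply (between_list_min_max _ _ _ _
           (in_map (dot3 p) _ _ (in_or_app _ _ _ (or_introl (in_map _ _ _ Ha))))
           (in_map (dot3 p) _ _ (in_or_app _ _ _ (or_intror (in_map _ _ _ Ha))))).
  exact (dot3_between_times p _ _ _ _ Ht).
Qed.

Theorem proposition6
  (Nr K : Type) (E : Nr -> Nr -> Prop) (P : Nr -> R * R)
  (vmax : R) (hv : 0 < vmax)
  (n : K -> nat -> Nr) (Nk : K -> nat) (tS tD : K -> R)
  (hN : forall k, (1 <= Nk k)%nat)
  (hpath : forall k a, (1 <= a)%nat -> (a + 1 <= Nk k)%nat -> E (n k a) (n k (a + 1)%nat))
  (p : (R * R) * R) (i j : K) :
  (forall y, ~ (in_I P vmax n Nk tS tD p i y /\ in_I P vmax n Nk tS tD p j y)) ->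
  g P vmax n Nk tS tD i j = 0%nat.
Proof.
  intros Hdisjoint; unfold g.
  destruct (ClassicalEpsilon.excluded_middle_informative _) as [Hcoord|]; [exfalso|reflexivity].
  destruct Hcoord as (a & b & Ha1 & Ha2 & Hb1 & Hb2 & HPab & _ & [t [Hti Htj]] & _).
  apply (Hdisjoint (dot3 p (P (n i a), t))); split.
  - apply in_I_of_window; [exact Ha1 | lia | exact Hti].
  - rewrite HPab; apply in_I_of_window; [exact Hb1 | lia | exact Htj].
Qed.
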